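(* For all $\alpha,\varepsilon>0$ and $k\in\mathbb{N}$, there exist $\eta>0$ and $N\in\mathbb{N}$ such that for all $n>N$ the following holds. Suppose $f\colon[n]\to[0,1]$ is such that every interval $J\subseteq[n]$ of length at least $\lfloor\eta n\rfloor$ satisfies \[ \Big|\frac{1}{|J|}\sum_{t\in J}f(t)-\alpha\Big|\le\eta. \] Then for all $x,y\in[k]$, \[ \sum_{t=\lceil\eta n\rceil}^{\lfloor(1-\eta)n\rfloor}f(t)\binom{t-1}{x}\binom{n-t}{y}\ge(1-\varepsilon)\alpha\binom{n}{x+y+1}. \]
   Context: An interval $J\subseteq[n]$ is a set of consecutive integers; its length is $|J|$. *)

From HB Require Import structures.
From mathcomp Require Import all_boot all_order all_algebra.
From mathcomp Require Import all_classical all_reals.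
Set Implicit Arguments. Unset Strict Implicit. Unset Printing Implicit Defensive.
Import Order.TTheory GRing.Theory Num.Theory.

(* By the hockey-stick identity, C(t-1, x) = sum_(0<a<t) C(a-1, x-1) and
   C(n-t, y) = sum_(t<b<=n) C(n-b, y-1), so C(t-1, x) C(n-t, y) is the sum of
   w(a, b) = C(a-1, x-1) C(n-b, y-1) over the windows (a, b) containing t.  The
   weighted sum of f over the trimmed range [ceil(eta n), floor((1-eta) n)] is
   therefore a nonnegative combination of sums of f over trimmed windows, and the
   averaging hypothesis bounds each of those below by
   (alpha - eta) (b - a - 1 - (3 eta n + 2)).  By Chu-Vandermonde the w(a, b)
   sum to C(n, x+y) and, weighted by b - a - 1, to C(n, x+y+1); as
   n C(n, x+y) <= 2 (x+y+1) C(n, x+y+1), the error term is an eps-fraction of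
   the main term once eta is small and n large. *)

From HB Require Import structures.
From mathcomp Require Import all_boot all_order all_algebra.
From mathcomp Require Import all_classical all_reals.
From mathcomp Require Import zify lra.
Set Implicit Arguments.
Unset Strict Implicit.
Unset Printing Implicit Defensive.
Import Order.TTheory GRing.Theory Num.Theory.

Lemma big_ord_itv {R : Type} {idx : R} {op : Monoid.law idx} (F : nat -> R)
    {n lo hi : nat} : hi <= n ->
  \big[op/idx]_(i < n | lo <= i < hi) F i = \big[op/idx]_(lo <= i < hi) F i.
Proof.
move=> le_hi_n; rewrite (big_nat_widen _ _ _ _ _ le_hi_n).
rewrite (@big_nat_widenl _ _ _ lo 0) // big_mkord.
by apply: eq_bigl => i; rewrite andbC.
Qed.

Lemma hockey_stick (s z : nat) : \sum_(j < s) 'C(j, z) = 'C(s, z.+1).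
Proof. by elim: s => [|s IHs]; rewrite ?big_ord0 // big_ord_recr IHs /= binS. Qed.

Lemma sum_bin_predn_lt (n t x : nat) : t <= n.+1 ->
  \sum_(a < n.+1 | 0 < a < t) 'C(a.-1, x) = 'C(t.-1, x.+1).
Proof.
move=> le_t_n; rewrite (big_ord_itv (fun a => 'C(a.-1, x))) // big_add1 /= big_mkord.
exact: hockey_stick.
Qed.

Lemma sum_bin_subn_gt (n t y : nat) : t <= n ->
  \sum_(b < n.+1 | t < b) 'C(n - b, y) = 'C(n - t, y.+1).
Proof.
move=> le_t_n; rewrite (reindex_inj rev_ord_inj) /=.
rewrite (eq_big (fun j : 'I_n.+1 => 0 <= j < n - t) (fun j => 'C(j, y))); first last.
- by move=> j _; rewrite subSS subKn // -ltnS.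
- by move=> j; have := ltn_ord j; lia.
by rewrite (big_ord_itv (fun j => 'C(j, y))) ?big_mkord ?hockey_stick // ltnW ?ltnS ?leq_subr.
Qed.

Lemma chu_vandermonde_ord (n x y : nat) :
  \sum_(t < n) 'C(t, x) * 'C(n - t.+1, y) = 'C(n, x + y + 1).
Proof.
elim: y n => [|y IHy] n.
  by rewrite addn0 addn1 -hockey_stick; apply: eq_bigr => t _; rewrite bin0 muln1.
elim: n => [|n IHn]; first by rewrite big_ord0 addn1.
rewrite big_ord_recr /= subnn bin0n muln0 addn0.
rewrite (eq_bigr (fun t : 'I_n => 'C(t, x) * 'C(n - t.+1, y.+1) + 'C(t, x) * 'C(n - t.+1, y))).
  by rewrite big_split /= IHn IHy [x + y.+1]addnS addSn binS.
by move=> t _; rewrite -mulnDr -binS subnSK.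
Qed.

Lemma chu_vandermonde (n x y : nat) :
  \sum_(t < n.+1 | 0 < t) 'C(t.-1, x) * 'C(n - t, y) = 'C(n, x + y + 1).
Proof.
rewrite -chu_vandermonde_ord big_mkcond big_ord_recl /= add0n.
by apply: eq_bigr => t _; rewrite /bump leq0n !add0n add1n.
Qed.

Lemma leq_mul_bin_succ (n m : nat) : 2 * m <= n -> n * 'C(n, m) <= 2 * m.+1 * 'C(n, m.+1).
Proof.
move=> le_2m_n; rewrite -mulnA mul_bin_left mulnA.
by apply: leq_mul (leqnn _); lia.
Qed.

Local Open Scope ring_scope.

Lemma exchange_window_sums (R : comPzSemiRingType) (n : nat) (P : pred nat)
    (g A B : nat -> R) :
  \sum_(t < n.+1 | P t) g t * ((\sum_(a < n.+1 | (0 < a < t)%N) A a) *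
                               (\sum_(b < n.+1 | (t < b)%N) B b)) =
  \sum_(a < n.+1 | (0 < a)%N) \sum_(b < n.+1 | (a < b)%N)
     A a * B b * \sum_(t < n.+1 | P t && (a < t < b)%N) g t.
Proof.
pose W (a b t : 'I_n.+1) : R :=
  if P t && (0 < a < t)%N && (t < b)%N then A a * B b * g t else 0.
transitivity (\sum_(t < n.+1) \sum_(a < n.+1) \sum_(b < n.+1) W a b t).
  rewrite big_mkcond; apply: eq_bigr => t _; rewrite /W.
  case: (P t) => /=; last by rewrite big1 // => a _; rewrite big1.
  rewrite big_distrlr mulr_sumr big_mkcond; apply: eq_bigr => a _ /=.
  case: (0 < a < t)%N => /=; last by rewrite big1.
  rewrite mulr_sumr big_mkcond; apply: eq_bigr => b _ /=.
  by case: (t < b)%N => //; rewrite mulrC.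
rewrite exchange_big [RHS]big_mkcond; apply: eq_bigr => a _ /=.
rewrite exchange_big; case: (posnP a) => [a0 | a_gt0] /=.
  by rewrite big1 // => b _; rewrite big1 // => t _; rewrite /W a0 andbF.
rewrite [RHS]big_mkcond; apply: eq_bigr => b _ /=.
case: (ltnP a b) => [_ | le_ba] /=.
  by rewrite mulr_sumr [RHS]big_mkcond; apply: eq_bigr => t _; rewrite /W a_gt0 -andbA.
rewrite big1 // => t _; rewrite /W; case: ifP => // /andP[/andP[_ /andP[_ lt_at]] lt_tb].
by move: (ltn_trans lt_at lt_tb); rewrite ltnNge le_ba.
Qed.

Section WindowSums.
Variables (R : archiRealFieldType) (n : nat) (f : nat -> R) (alpha eta : R).
Hypothesis f_ge0 : forall t, (1 <= t <= n)%N -> 0 <= f t.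
Hypothesis avg_near_alpha : forall a L : nat, (1 <= a)%N -> (1 <= L)%N -> (a + L <= n.+1)%N ->
  Num.floor (eta * n%:R) <= L%:Z -> `|L%:R^-1 * (\sum_(a <= t < a + L) f t) - alpha| <= eta.
Hypotheses (eta_ge0 : 0 <= eta) (eta_le_alpha : eta <= alpha).

Lemma window_sum_ge (lo hi : nat) : (0 < lo)%N -> (hi <= n.+1)%N ->
  (alpha - eta) * ((hi - lo)%:R - eta * n%:R) <= \sum_(lo <= t < hi) f t.
Proof.
move=> lo_gt0 le_hi_n; set L := (hi - lo)%N.
have sum_ge0 : 0 <= \sum_(lo <= t < hi) f t.
  rewrite big_nat_cond; apply: sumr_ge0 => t /andP[/andP[lo_t t_hi] _]; apply: f_ge0.
  by rewrite (leq_trans lo_gt0 lo_t) -ltnS (leq_trans t_hi le_hi_n).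
have eta_n_ge0 : 0 <= eta * n%:R by rewrite mulr_ge0.
have [/andP[L_gt0 long] | short] := boolP ((0 < L)%N && (Num.floor (eta * n%:R) <= L%:Z)).
  have lo_le_hi : (lo <= hi)%N by rewrite ltnW // -subn_gt0.
  have := avg_near_alpha lo_gt0 L_gt0 _ long; rewrite subnKC //; move=> /(_ le_hi_n).
  rewrite ler_distl ler_pdivlMl ?ltr0n // => /andP[le_sum _].
  by apply: le_trans le_sum; rewrite [leRHS]mulrC ler_wpM2l ?subr_ge0 // gerBl.
have L_small : L%:R <= eta * n%:R.
  move: short; rewrite negb_and -ltnNge -ltNge; case/orP => [| /ltW].
    by rewrite ltnS leqn0 => /eqP ->.
  by rewrite floor_ge_int -pmulrn.
by apply: le_trans sum_ge0; rewrite mulr_ge0_le0 ?subr_ge0 ?subr_le0.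
Qed.

Variables (c F : nat).
Hypotheses (c_small : c%:R <= eta * n%:R + 1) (F_large : n%:R <= F%:R + eta * n%:R + 1).
Hypothesis F_le_n : (F <= n)%N.

(* Trimming removes at most c + (n - F) <= 2 eta n + 2 points of the window. *)
Lemma trimmed_window_sum_ge (a b : nat) : (0 < a)%N -> (b <= n)%N ->
  (alpha - eta) * ((b - a.+1)%:R - (3 * eta * n%:R + 2)) <=
  \sum_(t < n.+1 | (c <= t <= F)%N && (a < t < b)%N) f t.
Proof.
move=> a_gt0 le_b_n.
rewrite (eq_bigl (fun t : 'I_n.+1 => maxn a.+1 c <= t < minn b F.+1)%N) => [|t]; last by lia.
rewrite (big_ord_itv f); last by lia.
have lo_gt0 : (0 < maxn a.+1 c)%N by lia.
have hi_le : (minn b F.+1 <= n.+1)%N by lia.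
apply: le_trans (window_sum_ge lo_gt0 hi_le).
rewrite ler_wpM2l ?subr_ge0 //.
have : (b - a.+1 <= (minn b F.+1 - maxn a.+1 c) + c + (n - F))%N by lia.
rewrite -(ler_nat R) !natrD (natrB _ F_le_n).
by move: c_small F_large; lra.
Qed.

Lemma trimmed_binomial_sum_lower (x y : nat) :
  (alpha - eta) * ('C(n, x.+1 + y.+1 + 1)%:R - (3 * eta * n%:R + 2) * 'C(n, x + y.+1 + 1)%:R)
  <= \sum_(t < n.+1 | (c <= t <= F)%N) f t * 'C(t.-1, x.+1)%:R * 'C(n - t, y.+1)%:R.
Proof.
pose w (a b : nat) : R := 'C(a.-1, x)%:R * 'C(n - b, y)%:R.
have split_weights (g : nat -> R) (P : pred nat) :
    \sum_(t < n.+1 | P t) g t * 'C(t.-1, x.+1)%:R * 'C(n - t, y.+1)%:R =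
    \sum_(a < n.+1 | (0 < a)%N) \sum_(b < n.+1 | (a < b)%N)
       w a b * \sum_(t < n.+1 | P t && (a < t < b)%N) g t.
  rewrite /w -(exchange_window_sums _ _ _ (fun a => 'C(a.-1, x)%:R) (fun b => 'C(n - b, y)%:R)).
  apply: eq_bigr => t _.
  rewrite -mulrA -!natr_sum (sum_bin_predn_lt x (ltnW (ltn_ord t))).
  by rewrite (sum_bin_subn_gt y (ltn_ord t : t <= n)%N).
have total_weight : 'C(n, x.+1 + y.+1 + 1)%:R =
    \sum_(a < n.+1 | (0 < a)%N) \sum_(b < n.+1 | (a < b)%N) w a b * (b - a.+1)%:R.
  rewrite -chu_vandermonde natr_sum.
  rewrite (eq_bigr (fun t : 'I_n.+1 => 1 * 'C(t.-1, x.+1)%:R * 'C(n - t, y.+1)%:R)); last first.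
    by move=> t _; rewrite mul1r natrM.
  rewrite (split_weights (fun=> 1) (fun t => 0 < t)%N).
  apply: eq_bigr => a a_gt0; apply: eq_bigr => b _; congr (_ * _).
  rewrite (eq_bigl (fun t : 'I_n.+1 => a.+1 <= t < b)%N) => [|t]; last by lia.
  by rewrite (big_ord_itv (fun=> 1) (ltnW (ltn_ord b))) sumr_const_nat.
have pair_weight : 'C(n, x + y.+1 + 1)%:R =
    \sum_(a < n.+1 | (0 < a)%N) \sum_(b < n.+1 | (a < b)%N) w a b.
  rewrite -chu_vandermonde natr_sum; apply: eq_bigr => a _.
  by rewrite natrM /w -mulr_sumr -natr_sum (sum_bin_subn_gt y (ltn_ord a : a <= n)%N).
rewrite total_weight pair_weight (split_weights f (fun t => c <= t <= F)%N).
set E := 3 * eta * n%:R + 2.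
rewrite mulr_sumr -sumrB mulr_sumr; apply: ler_sum => a a_gt0.
rewrite mulr_sumr -sumrB mulr_sumr; apply: ler_sum => b _.
rewrite [E * _]mulrC -mulrBr mulrCA ler_wpM2l ?mulr_ge0 ?ler0n //.
exact: trimmed_window_sum_ge (ltn_ord b).
Qed.

End WindowSums.

Section Rounding.
Variable R : archiRealFieldType.

Lemma ceil_natP (x : R) : 0 <= x -> exists2 c : nat, Num.ceil x = c%:Z & c%:R <= x + 1.
Proof.
move=> x_ge0; have : 0 <= Num.ceil x by rewrite ceil_ge0 (lt_le_trans (ltrN10 R)).
move=> /gez0_abs ceil_c; exists `|Num.ceil x|%N => //.
by have := ceilB1_lt x; rewrite -ceil_c intrB -pmulrn ltrBlDr => /ltW.
Qed.

Lemma floor_natP (x : R) : 0 <= x ->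
  exists2 m : nat, Num.floor x = m%:Z & m%:R <= x <= m%:R + 1.
Proof.
move=> x_ge0; have : 0 <= Num.floor x by rewrite floor_ge0.
move=> /gez0_abs floor_m; exists `|Num.floor x|%N => //.
by have := floor_itv x; rewrite -floor_m intrD -pmulrn => /andP[-> /ltW].
Qed.

End Rounding.

Lemma error_term_absorbed (R : realFieldType) (alpha eps eta K n Cm Cq : R) :
  0 < n -> 0 < eps <= 1 -> 0 <= eta <= alpha -> 3 * eta <= eps * alpha ->
  18 * K * eta <= eps -> 12 * K <= eps * n -> 0 <= Cq -> 0 <= Cm -> n * Cq <= 2 * K * Cm ->
  (1 - eps) * alpha * Cm <= (alpha - eta) * (Cm - (3 * eta * n + 2) * Cq).
Proof.
move=> n_gt0 /andP[eps_gt0 eps_le1] /andP[eta_ge0 eta_le_alpha] eta_alpha eta_K n_K.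
move=> Cq_ge0 Cm_ge0 ratio.
have first_err : 3 * eta * n * Cq <= eps / 3 * Cm.
  have : 3 * eta * (n * Cq) <= 3 * eta * (2 * K * Cm) by rewrite ler_wpM2l ?mulr_ge0.
  by nra.
have second_err : 2 * Cq <= eps / 3 * Cm by rewrite -(ler_pM2l n_gt0); nra.
have err : (3 * eta * n + 2) * Cq <= 2 / 3 * eps * Cm by lra.
apply: (@le_trans _ _ ((alpha - eta) * ((1 - 2 / 3 * eps) * Cm))); last first.
  by rewrite ler_wpM2l ?subr_ge0 //; lra.
nra.
Qed.

Lemma trimmed_binomial_sum_ge (R : archiRealFieldType) (k n : nat) (f : nat -> R)
    (alpha eps eta : R) :
  0 < eps <= 1 -> 0 < eta <= alpha -> 3 * eta <= eps * alpha ->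
  18 * (2 * k).+1%:R * eta <= eps -> 12 * (2 * k).+1%:R <= eps * n%:R -> (4 * k < n)%N ->
  (forall t : nat, (1 <= t <= n)%N -> 0 <= f t) ->
  (forall a L : nat, (1 <= a)%N -> (1 <= L)%N -> (a + L <= n.+1)%N ->
     Num.floor (eta * n%:R) <= L%:Z ->
     `| L%:R^-1 * (\sum_(a <= t < a + L) f t) - alpha | <= eta) ->
  forall x y : nat, (1 <= x <= k)%N -> (1 <= y <= k)%N ->
    (1 - eps) * alpha * ('C(n, x + y + 1))%:R <=
    \sum_(t < n.+1 | (Num.ceil (eta * n%:R) <= (t : nat)%:Z) &&
                     ((t : nat)%:Z <= Num.floor ((1 - eta) * n%:R)))
       f t * ('C(t.-1, x))%:R * ('C(n - t, y))%:R.
Proof.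
move=> eps_01 /andP[eta_gt0 eta_le_alpha] eta_alpha eta_K n_large lt_4k_n f_ge0 avg x y.
case: x => [|x] /andP[] // _ le_xk; case: y => [|y] /andP[] // _ le_yk.
have n_gt0 : 0 < n%:R :> R by rewrite ltr0n (leq_ltn_trans (leq0n _) lt_4k_n).
have one_minus_eta_ge0 : 0 <= 1 - eta.
  have : 1 <= (2 * k).+1%:R :> R by rewrite ler1n.
  case/andP: eps_01; nra.
have [c ceil_c c_small] := ceil_natP (mulr_ge0 (ltW eta_gt0) (ltW n_gt0)).
have [F floor_F /andP[F_le F_gt]] := floor_natP (mulr_ge0 one_minus_eta_ge0 (ltW n_gt0)).
rewrite (eq_bigl (fun t : 'I_n.+1 => c <= t <= F)%N) => [|t]; last first.
  by rewrite ceil_c floor_F !lez_nat.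
have F_le_n : (F <= n)%N.
  rewrite -(ler_nat R); apply: le_trans F_le _.
  by apply: ler_piMl (ltW n_gt0) _; rewrite gerBl ltW.
have F_large : n%:R <= F%:R + eta * n%:R + 1 by move: F_gt; rewrite mulrBl mul1r; lra.
apply: le_trans (trimmed_binomial_sum_lower f_ge0 avg (ltW eta_gt0) eta_le_alpha
                   c_small F_large F_le_n x y).
have ratio : (n * 'C(n, x + y.+1 + 1) <= 2 * (2 * k).+1 * 'C(n, x.+1 + y.+1 + 1))%N.
  rewrite [in X in (_ <= X)%N]addSn addSn.
  have le_2m_n : (2 * (x + y.+1 + 1) <= n)%N by clear -lt_4k_n le_xk le_yk; lia.
  apply: leq_trans (leq_mul_bin_succ le_2m_n) _.
  apply: leq_mul (leq_mul (leqnn 2) _) (leqnn _).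
  by rewrite ltnS; clear -le_xk le_yk; lia.
apply: (error_term_absorbed (K := (2 * k).+1%:R)).
all: rewrite ?eps_01 ?(ltW eta_gt0) ?eta_le_alpha ?ler0n //.
by rewrite -!natrM ler_nat.
Qed.

Theorem lemma3p5 (R : realType) (alpha eps : R) (k : nat) :
  0 < alpha -> 0 < eps ->
  exists eta : R, 0 < eta /\ exists N : nat, forall n : nat, (N < n)%N ->
  forall f : nat -> R,
    (forall t : nat, (1 <= t <= n)%N -> 0 <= f t <= 1) ->
    (* every interval J = {a, ..., a+L-1} of [n] = {1..n}, |J| = L >= floor(eta n) *)
    (forall a L : nat, (1 <= a)%N -> (1 <= L)%N -> (a + L <= n.+1)%N ->
       Num.floor (eta * n%:R) <= L%:Z ->
       `| L%:R^-1 * (\sum_(a <= t < a + L) f t) - alpha | <= eta) ->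
    forall x y : nat, (1 <= x <= k)%N -> (1 <= y <= k)%N ->
      (1 - eps) * alpha * ('C(n, x + y + 1))%:R <=
      \sum_(t < n.+1 | (Num.ceil (eta * n%:R) <= (t : nat)%:Z) &&
                       ((t : nat)%:Z <= Num.floor ((1 - eta) * n%:R)))
         f t * ('C(t.-1, x))%:R * ('C(n - t, y))%:R.
Proof.
move=> alpha_gt0 eps_gt0.
wlog eps_le1 : eps eps_gt0 / eps <= 1.
  move=> main; have [/main|lt1_eps] := lerP eps 1; first exact.
  have [eta [eta_gt0 [N bound]]] := main 1 ltr01 (lexx 1).
  exists eta; split=> //; exists N => n lt_Nn f f01 avg x y xk yk.
  apply: le_trans (bound n lt_Nn f f01 avg x y xk yk).
  by rewrite subrr !mul0r mulr_le0_ge0 ?mulr_le0_ge0 ?subr_le0 ?ler0n ?ltW.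
pose K : R := (2 * k).+1%:R.
have K_ge1 : 1 <= K by rewrite ler1n.
pose eta := eps * alpha / (18 * K * (1 + alpha)).
have eta_def : 18 * K * (1 + alpha) * eta = eps * alpha.
  by rewrite /eta mulrC divfK // gt_eqF // !mulr_gt0 //; lra.
have eta_gt0 : 0 < eta by rewrite divr_gt0 ?mulr_gt0 //; lra.
have eta_K : 18 * K * eta <= eps by nra.
have eta_alpha : 3 * eta <= eps * alpha by nra.
have eta_le_alpha : eta <= alpha by nra.
exists eta; split=> //; exists (4 * k + Num.bound (12 * K / eps))%N => n lt_Nn f f01.
have n_large : 12 * K <= eps * n%:R.
  have bound_ge0 : 0 <= 12 * K / eps by rewrite divr_ge0 ?mulr_ge0 ?ltW.
  rewrite -ler_pdivrMl // mulrC; apply/ltW/(lt_le_trans (archi_boundP bound_ge0)).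
  by rewrite ler_nat (leq_trans (leq_addl _ _) (ltnW lt_Nn)).
apply: (trimmed_binomial_sum_ge _ _ eta_alpha eta_K n_large); rewrite ?eps_gt0 ?eps_le1 ?eta_gt0 //.
- exact: leq_ltn_trans (leq_addr _ _) lt_Nn.
- by move=> t /f01/andP[].
Qed.
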